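(* Let $p_1=(\alpha,r,\delta)$ be a condition, $D\subseteq\ell^2$ a dense open set, and $N\in\omega$. Then there exists a condition $p_2=(\beta,s,\eta)$ such that $p_2<p_1$, $U_{s,\eta}\subseteq D$, and $|\beta|>N$.
   Context: $\omega=\{0,1,2,\dots\}$; $\ell^2$ is the Hilbert space of square-summable real sequences indexed by $\omega$. For nonempty $q\in\mathbb Q^{<\omega}$ and rational $\varepsilon>0$, $U_{q,\varepsilon}=\{x\in\ell^2:\lVert (x\upharpoonright|q|)-q\rVert_\infty<\varepsilon|q|^{-1/2}\text{ and }\lVert x\upharpoonright[|q|,\infty)\rVert_2<\varepsilon\}$; for $q$ empty, $U_{q,\varepsilon}=\{x:\lVert x\rVert_2<\varepsilon\}$. For $w\in\{1,2\}^\omega$, $B_w(x)(i)=w(i)x(i+1)$. For $\alpha\in\{1,2\}^{<\omega}$, $\alpha^+\in\{1,2\}^\omega$ is $\alpha$ followed by all $2$'s. A condition is a triple $(\alpha,r,\delta)\in\{1,2\}^{<\omega}\times\mathbb Q^{<\omega}\times(\mathbb Q\cap(0,1))$ with $|\alpha|\ge|r|$ and $\delta<2^{-|\alpha|}$. For conditions $p_1=(\alpha_1,r_1,\delta_1)$ and $p_2=(\alpha_2,r_2,\delta_2)$, $p_2<p_1$ means: $\alpha_1$ is an initial segment of $\alpha_2$; the closure $\overline{U_{r_2,\delta_2}}\subseteq U_{r_1,\delta_1}$; and for all $k\in[|\alpha_1|,|\alpha_2|)$, $B^k_{\alpha_2^+}[U_{r_2,\delta_2}]\subseteq\{y\in\ell^2:\lVert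 y\rVert_2<1\}$. *)

From Stdlib Require Import Reals QArith Qreals List Lra.
From Coquelicot Require Import Coquelicot.
Import ListNotations.
Open Scope R_scope.

Definition seqR := nat -> R.
Definition l2 (x : seqR) : Prop := ex_series (fun i => (x i) ^ 2).
Definition norm2 (x : seqR) : R := sqrt (Series (fun i => (x i) ^ 2)).
Definition tail_norm2 (n : nat) (x : seqR) : R :=
  sqrt (Series (fun i => (x (i + n)%nat) ^ 2)).
Definition sub_seq (x y : seqR) : seqR := fun i => x i - y i.

(* Basic open sets U_{q,eps} (subsets of l^2).  For nonempty q, the sup-norm
   condition ||x|q - q||_oo < eps |q|^{-1/2} is written out coordinatewise. *)
Definition U (q : list Q) (eps : Q) (x : seqR) : Prop :=
  l2 x /\
  match q with
  | [] => norm2 x < Q2R eps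
  | _ =>
      (forall i, (i < length q)%nat ->
         Rabs (x i - Q2R (nth i q 0%Q)) < Q2R eps / sqrt (INR (length q)))
      /\ tail_norm2 (length q) x < Q2R eps
  end.

Definition closure_l2 (A : seqR -> Prop) (x : seqR) : Prop :=
  l2 x /\ forall e, 0 < e -> exists y, A y /\ norm2 (sub_seq x y) < e.
Definition open_l2 (D : seqR -> Prop) : Prop :=
  forall x, l2 x -> D x -> exists e, 0 < e /\
    forall y, l2 y -> norm2 (sub_seq y x) < e -> D y.
Definition dense_l2 (D : seqR -> Prop) : Prop :=
  forall x, l2 x -> forall e, 0 < e -> exists y, l2 y /\ D y /\ norm2 (sub_seq x y) < e.

Definition B (w : nat -> R) (x : seqR) : seqR := fun i => w i * x (S i).
Definition Biter (w : nat -> R) (k : nat) (x : seqR) : seqR := Nat.iter k (B w) x.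
Definition plus_ext (a : list nat) : nat -> R := fun i => INR (nth i a 2%nat).

Definition is_condition (a : list nat) (r : list Q) (d : Q) : Prop :=
  List.Forall (fun k => k = 1%nat \/ k = 2%nat) a /\
  (length r <= length a)%nat /\
  (0 < d)%Q /\ (d < 1)%Q /\
  Q2R d < pow (/ 2) (length a).

Definition cond_lt (a2 : list nat) (r2 : list Q) (d2 : Q)
                   (a1 : list nat) (r1 : list Q) (d1 : Q) : Prop :=
  (exists t, a2 = a1 ++ t) /\
  (forall x, closure_l2 (U r2 d2) x -> U r1 d1 x) /\
  (forall k, (length a1 <= k)%nat -> (k < length a2)%nat ->
     forall x, U r2 d2 x -> norm2 (Biter (plus_ext a2) k x) < 1).

From Stdlib Require Import Reals QArith Qreals List Lra Lia.
From Coquelicot Require Import Coquelicot.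
Open Scope R_scope.

(* Near the centre r of U_{r,δ} pick a point of D with a ball around it inside D, and
   approximate that point by a finitely supported rational sequence s; then take a tiny
   rational η and extend α by 1's up to |s|.  Smallness of η and of ‖s − r‖ give
   closure(U_{s,η}) ⊆ U_{r,δ} and U_{s,η} ⊆ D.  For |α| ≤ k < |s|, the coefficient of
   x(i + k) in B^k x (i) is a product of k weights; when i + k < |s| only those at
   indices below |α| can be 2, and r vanishes beyond |α| ≤ k, so
     ‖B^k x‖² ≤ 2·4^|α|·‖s − r‖² + 2·4^|s|·‖x − s‖² < 1.
   Distances are compared through squared norms and ‖x − z‖² ≤ 2‖x − y‖² + 2‖y − z‖²,
   which avoids Minkowski's inequality in ℓ². *)

Definition sqnorm (x : seqR) : R := Series (fun i => x i ^ 2).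
Definition sqdist (x y : seqR) : R := sqnorm (sub_seq x y).

Lemma sqnorm_nonneg x : l2 x -> 0 <= sqnorm x.
Proof.
  intros Hx. replace 0 with (Series (fun i => 0 * x i ^ 2)) by (rewrite Series_scal_l; ring).
  apply Series_le; [intros i; pose proof (pow2_ge_0 (x i)); lra | exact Hx].
Qed.

Lemma sqrt_lt_iff S c : 0 < c -> sqrt S < c <-> S < c ^ 2.
Proof.
  intros Hc. rewrite <- (sqrt_pow2 c) at 1 by lra. split; [apply sqrt_lt_0_alt|].
  intros H. destruct (Rle_or_lt 0 S) as [HS | HS].
  - apply sqrt_lt_1_alt. lra.
  - rewrite (sqrt_neg_0 S) by lra. apply sqrt_lt_R0. pose proof (pow_lt c 2 Hc). lra.
Qed.

Lemma norm2_lt_iff x c : 0 < c -> norm2 x < c <-> sqnorm x < c ^ 2.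
Proof. apply sqrt_lt_iff. Qed.

Lemma sq_add_le a b : (a + b) ^ 2 <= 2 * a ^ 2 + 2 * b ^ 2.
Proof. pose proof (pow2_ge_0 (a - b)). nra. Qed.

Lemma sq_lt_of_abs_lt a b : Rabs a < b -> a ^ 2 < b ^ 2.
Proof. intros H. rewrite <- pow2_abs. pose proof (Rabs_pos a). nra. Qed.

Lemma abs_lt_of_sq_lt a b : 0 <= b -> a ^ 2 < b ^ 2 -> Rabs a < b.
Proof. intros Hb H. rewrite <- pow2_abs in H. pose proof (Rabs_pos a). nra. Qed.

Lemma sq_div_sqrt c L : 0 < L -> (c / sqrt L) ^ 2 = c ^ 2 / L.
Proof. intros HL. unfold Rdiv. rewrite Rpow_mult_distr, pow_inv, pow2_sqrt by lra. reflexivity. Qed.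

Lemma sq_mul_le c C z : 0 <= c <= C -> (c * z) ^ 2 <= C ^ 2 * z ^ 2.
Proof.
  intros Hc. rewrite Rpow_mult_distr. apply Rmult_le_compat_r; [apply pow2_ge_0|].
  apply pow_incr. exact Hc.
Qed.

Lemma pow4_sq n : 4 ^ n = (2 ^ n) ^ 2.
Proof. replace 4 with (2 * 2) by ring. rewrite Rpow_mult_distr. ring. Qed.

Lemma mul_lt_of_lt_inv P t c : 0 < P -> 0 < c -> t < / (c * P) -> P * t < / c.
Proof.
  intros HP Hc Ht. apply Rlt_le_trans with (P * / (c * P)).
  - apply Rmult_lt_compat_l; assumption.
  - right. field. lra.
Qed.

Lemma l2_sub x y : l2 x -> l2 y -> l2 (sub_seq x y).
Proof.
  intros Hx Hy.
  apply (ex_series_le (V := R_CompleteNormedModule)) with (fun i => 2 * x i ^ 2 + 2 * y i ^ 2).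
  - intros i. rewrite Rabs_pos_eq by apply pow2_ge_0. unfold sub_seq.
    replace ((x i - y i) ^ 2) with ((x i + - y i) ^ 2) by ring.
    replace (y i ^ 2) with ((- y i) ^ 2) by ring. apply sq_add_le.
  - apply (ex_series_plus (V := R_NormedModule));
      apply (ex_series_scal_l (V := R_NormedModule)); assumption.
Qed.

Lemma sqdist_sym x y : sqdist x y = sqdist y x.
Proof. apply Series_ext. intros i. unfold sub_seq. ring. Qed.

Lemma sqdist_triangle x y z : l2 x -> l2 y -> l2 z ->
  sqdist x z <= 2 * sqdist x y + 2 * sqdist y z.
Proof.
  intros Hx Hy Hz. unfold sqdist, sqnorm.
  assert (Hxy := l2_sub x y Hx Hy). assert (Hyz := l2_sub y z Hy Hz).
  rewrite <- !Series_scal_l, <- Series_plus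
    by (apply (ex_series_scal_l (V := R_NormedModule)); assumption).
  apply Series_le.
  - intros i. split; [apply pow2_ge_0|]. unfold sub_seq.
    replace (x i - z i) with ((x i - y i) + (y i - z i)) by ring. apply sq_add_le.
  - apply (ex_series_plus (V := R_NormedModule));
      apply (ex_series_scal_l (V := R_NormedModule)); assumption.
Qed.

Lemma l2_tail n x : l2 x -> l2 (fun i => x (i + n)%nat).
Proof.
  intros Hx. apply (ex_series_incr_n _ n) in Hx.
  apply (ex_series_ext (fun i => x (n + i)%nat ^ 2)); [|exact Hx].
  intros i. rewrite Nat.add_comm. reflexivity.
Qed.

Lemma sqnorm_split n x : l2 x ->
  sqnorm x = sum_n (fun i => x i ^ 2) n + sqnorm (fun i => x (i + S n)%nat).
Proof.
  intros Hx. unfold sqnorm. rewrite (Series_incr_n _ (S n)) by (lia || assumption).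
  rewrite sum_n_Reals. f_equal. apply Series_ext. intros i. rewrite Nat.add_comm. reflexivity.
Qed.

Lemma sum_n_sq_nonneg (x : seqR) n : 0 <= sum_n (fun i => x i ^ 2) n.
Proof.
  induction n as [|n IH]; [rewrite sum_O; apply pow2_ge_0|].
  rewrite sum_Sn. pose proof (pow2_ge_0 (x (S n))).
  change (0 <= sum_n (fun i => x i ^ 2) n + x (S n) ^ 2). lra.
Qed.

Lemma sum_n_le_const (f : nat -> R) t n :
  (forall i, (i <= n)%nat -> f i <= t) -> sum_n f n <= INR (S n) * t.
Proof.
  induction n as [|n IH]; intros Hf.
  - rewrite sum_O. simpl. specialize (Hf 0%nat (le_n 0)). lra.
  - rewrite sum_Sn, S_INR. change (sum_n f n + f (S n) <= (INR (S n) + 1) * t).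
    specialize (IH (fun i Hi => Hf i (le_S _ _ Hi))). specialize (Hf (S n) (le_n _)). lra.
Qed.

Lemma sqnorm_tail_le n x : l2 x -> sqnorm (fun i => x (i + n)%nat) <= sqnorm x.
Proof.
  intros Hx. destruct n as [|n].
  - right. apply Series_ext. intros i. rewrite Nat.add_0_r. reflexivity.
  - rewrite (sqnorm_split n x Hx). pose proof (sum_n_sq_nonneg x n). lra.
Qed.

Lemma sq_coord_le i x : l2 x -> x i ^ 2 <= sqnorm x.
Proof.
  intros Hx. rewrite (sqnorm_split i x Hx).
  pose proof (sqnorm_nonneg _ (l2_tail (S i) x Hx)).
  destruct i as [|i]; [rewrite sum_O; lra|].
  rewrite sum_Sn. pose proof (sum_n_sq_nonneg x i).
  change (x (S i) ^ 2 <= sum_n (fun i => x i ^ 2) i + x (S i) ^ 2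
                        + sqnorm (fun j => x (j + S (S i))%nat)).
  lra.
Qed.

Lemma sqnorm_tail_small x eps M : l2 x -> 0 < eps ->
  exists n, (M <= n)%nat /\ sqnorm (fun i => x (i + S n)%nat) < eps.
Proof.
  intros Hx Heps. pose proof (Series_correct _ Hx) as Hs.
  apply is_series_Reals in Hs. destruct (Hs eps Heps) as [n0 Hn0].
  exists (Nat.max n0 M). split; [lia|].
  specialize (Hn0 (Nat.max n0 M) (Nat.le_max_l _ _)).
  change (Series (fun i => x i ^ 2)) with (sqnorm x) in Hn0.
  rewrite (sqnorm_split (Nat.max n0 M) x Hx), sum_n_Reals in Hn0.
  unfold R_dist in Hn0.
  rewrite Rabs_minus_sym, Rplus_minus_l, Rabs_pos_eq in Hn0 by apply sqnorm_nonneg, l2_tail, Hx.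
  exact Hn0.
Qed.

Lemma ex_series_zero : ex_series (fun _ : nat => 0).
Proof.
  exists 0. apply (is_lim_seq_ext (fun _ => 0) _ (Finite 0)); [|apply is_lim_seq_const].
  intros n. rewrite sum_n_const. ring.
Qed.

Definition pad (s : list Q) : seqR := fun i => Q2R (nth i s 0%Q).

Lemma pad_beyond s i : (length s <= i)%nat -> pad s i = 0.
Proof. intros H. unfold pad. rewrite nth_overflow by exact H. apply RMicromega.Q2R_0. Qed.

Lemma l2_pad s : l2 (pad s).
Proof.
  apply (ex_series_incr_n _ (length s)), (ex_series_ext (fun _ => 0)); [|exact ex_series_zero].
  intros i. rewrite pad_beyond by lia. simpl. ring.
Qed.

Lemma sqnorm_tail_sub_pad x s n : (length s <= n)%nat ->
  sqnorm (fun i => sub_seq x (pad s) (i + n)%nat) = sqnorm (fun i => x (i + n)%nat).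
Proof.
  intros H. apply Series_ext. intros i. unfold sub_seq. rewrite pad_beyond by lia.
  ring_simplify. reflexivity.
Qed.

Lemma sqdist_pad_split x s n : l2 x -> length s = S n ->
  sqdist x (pad s) = sum_n (fun i => (x i - pad s i) ^ 2) n + sqnorm (fun i => x (i + S n)%nat).
Proof.
  intros Hx Hs. unfold sqdist. rewrite (sqnorm_split n _ (l2_sub _ _ Hx (l2_pad s))).
  rewrite sqnorm_tail_sub_pad by lia. reflexivity.
Qed.

Lemma Q2R_over_succ z N : Q2R (z # Pos.of_succ_nat N) = IZR z / INR (S N).
Proof.
  unfold Q2R; simpl. rewrite Znat.Zpos_P_of_succ_nat, <- Znat.Nat2Z.inj_succ, <- INR_IZR_INZ.
  reflexivity.
Qed.

Lemma exists_inv_succ_lt t : 0 < t -> exists N, / INR (S N) < t.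
Proof.
  intros Ht. destruct (archimed_cor1 t Ht) as ([|N] & HN & HN0); [lia|].
  exists N. exact HN.
Qed.

Lemma exists_pos_Q_lt t : 0 < t -> exists e : Q, 0 < Q2R e < t.
Proof.
  intros Ht. destruct (exists_inv_succ_lt t Ht) as [N HN].
  exists (1 # Pos.of_succ_nat N). rewrite Q2R_over_succ.
  pose proof (lt_0_INR (S N) (Nat.lt_0_succ N)).
  split; [apply Rdiv_lt_0_compat; lra | unfold Rdiv; lra].
Qed.

Definition round_Q (N : nat) (r : R) : Q := up (r * INR (S N)) # Pos.of_succ_nat N.

Lemma round_Q_sq_err N r : (Q2R (round_Q N r) - r) ^ 2 <= / INR (S N).
Proof.
  unfold round_Q. rewrite Q2R_over_succ.
  pose proof (lt_0_INR (S N) (Nat.lt_0_succ N)) as HK.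
  assert (HK1 : / INR (S N) <= 1).
  { rewrite <- Rinv_1. apply Rinv_le_contravar; [lra|].
    rewrite S_INR. pose proof (pos_INR N). lra. }
  destruct (archimed (r * INR (S N))) as [Hup1 Hup2].
  set (u := IZR (up (r * INR (S N)))) in *.
  assert (Herr : u / INR (S N) - r = (u - r * INR (S N)) * / INR (S N)) by (field; lra).
  assert (Hpos : 0 <= u / INR (S N) - r).
  { rewrite Herr. apply Rmult_le_pos; [lra | apply Rlt_le, Rinv_0_lt_compat, HK]. }
  assert (Hle : u / INR (S N) - r <= / INR (S N)).
  { rewrite Herr. rewrite <- (Rmult_1_l (/ INR (S N))) at 2.
    apply Rmult_le_compat_r; [apply Rlt_le, Rinv_0_lt_compat, HK | lra]. }
  assert (0 < / INR (S N)) by apply Rinv_0_lt_compat, HK.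
  set (err := u / INR (S N) - r) in *. set (k := / INR (S N)) in *. nra.
Qed.

Lemma exists_pad_close y eps M : l2 y -> 0 < eps ->
  exists s, (M < length s)%nat /\ sqdist (pad s) y < eps.
Proof.
  intros Hy Heps.
  destruct (sqnorm_tail_small y (eps / 2) M Hy ltac:(lra)) as (n & HMn & Htail).
  assert (Hn : 0 < INR (S n)) by apply lt_0_INR, Nat.lt_0_succ.
  destruct (exists_inv_succ_lt (eps / (2 * INR (S n)))) as [N HN].
  { apply Rdiv_lt_0_compat; lra. }
  set (s := map (fun i => round_Q N (y i)) (seq 0 (S n))).
  assert (Hs : length s = S n) by (unfold s; rewrite length_map, length_seq; reflexivity).
  exists s. split; [lia|].
  rewrite sqdist_sym, (sqdist_pad_split y s n Hy Hs).
  assert (Hsum : sum_n (fun i => (y i - pad s i) ^ 2) n <= INR (S n) * / INR (S N)).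
  { apply sum_n_le_const. intros i Hi.
    unfold pad, s. rewrite (nth_indep _ _ ((fun i => round_Q N (y i)) 0%nat))
      by (rewrite length_map, length_seq; lia).
    rewrite (map_nth (fun i => round_Q N (y i))), seq_nth by lia.
    rewrite Nat.add_0_l, <- pow2_abs, Rabs_minus_sym, pow2_abs.
    apply round_Q_sq_err. }
  assert (INR (S n) * / INR (S N) < eps / 2).
  { apply Rmult_lt_reg_l with (/ INR (S n)); [apply Rinv_0_lt_compat, Hn|].
    rewrite <- Rmult_assoc, Rinv_l by lra.
    replace (/ INR (S n) * (eps / 2)) with (eps / (2 * INR (S n))) by (field; lra).
    lra. }
  lra.
Qed.

Lemma U_cons_sqdist q s e x : U (q :: s) e x -> sqdist x (pad (q :: s)) < 2 * Q2R e ^ 2.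
Proof.
  intros (Hx & Hcoord & Htail).
  assert (HL : 0 < INR (S (length s))) by apply lt_0_INR, Nat.lt_0_succ.
  rewrite (sqdist_pad_split x (q :: s) (length s) Hx eq_refl).
  assert (Hsum : sum_n (fun i => (x i - pad (q :: s) i) ^ 2) (length s)
                 <= INR (S (length s)) * (Q2R e ^ 2 / INR (S (length s)))).
  { apply sum_n_le_const. intros i Hi. rewrite <- (sq_div_sqrt _ _ HL).
    apply Rlt_le, sq_lt_of_abs_lt, Hcoord. simpl. lia. }
  replace (INR (S (length s)) * (Q2R e ^ 2 / INR (S (length s)))) with (Q2R e ^ 2) in Hsum
    by (field; lra).
  change (sqrt (sqnorm (fun i => x (i + S (length s))%nat)) < Q2R e) in Htail.
  pose proof (sqrt_pos (sqnorm (fun i => x (i + S (length s))%nat))).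
  apply sqrt_lt_iff in Htail; [| lra].
  lra.
Qed.

Lemma U_of_sqdist r d x : 0 < Q2R d -> l2 x ->
  sqdist x (pad r) < Q2R d ^ 2 / INR (S (length r)) -> U r d x.
Proof.
  intros Hd Hx Hclose.
  assert (HL : 0 < INR (S (length r))) by apply lt_0_INR, Nat.lt_0_succ.
  assert (HdL : Q2R d ^ 2 / INR (S (length r)) <= Q2R d ^ 2).
  { unfold Rdiv. rewrite <- (Rmult_1_r (Q2R d ^ 2)) at 2.
    apply Rmult_le_compat_l; [apply pow2_ge_0|]. rewrite <- Rinv_1.
    apply Rinv_le_contravar; [lra|]. rewrite S_INR. pose proof (pos_INR (length r)). lra. }
  split; [exact Hx|]. destruct r as [|q r].
  - apply norm2_lt_iff; [exact Hd|].
    replace (sqnorm x) with (sqdist x (pad nil)); [lra|].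
    apply Series_ext. intros i. unfold sub_seq. rewrite pad_beyond by (simpl; lia). ring.
  - assert (HLr : 0 < INR (length (q :: r))) by (apply lt_0_INR; simpl; lia).
    split.
    + intros i Hi. apply abs_lt_of_sq_lt.
      { apply Rlt_le, Rdiv_lt_0_compat; [lra | apply sqrt_lt_R0, HLr]. }
      rewrite sq_div_sqrt by exact HLr.
      apply Rle_lt_trans with (1 := sq_coord_le i _ (l2_sub _ _ Hx (l2_pad (q :: r)))).
      apply Rlt_le_trans with (1 := Hclose).
      unfold Rdiv. apply Rmult_le_compat_l; [apply pow2_ge_0|].
      apply Rinv_le_contravar; [exact HLr|]. rewrite S_INR. lra.
    + change (sqrt (sqnorm (fun i => x (i + length (q :: r))%nat)) < Q2R d).
      apply sqrt_lt_iff; [exact Hd|].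
      rewrite <- (sqnorm_tail_sub_pad x (q :: r)) by lia.
      pose proof (sqnorm_tail_le (length (q :: r)) _ (l2_sub _ _ Hx (l2_pad (q :: r)))).
      unfold sqdist in Hclose. lra.
Qed.

Lemma closure_U_cons_sqdist q s e x : 0 < Q2R e ->
  closure_l2 (U (q :: s) e) x -> sqdist x (pad (q :: s)) < 6 * Q2R e ^ 2.
Proof.
  intros He (Hx & Hcl). destruct (Hcl (Q2R e) He) as (z & Hz & Hxz).
  pose proof (U_cons_sqdist _ _ _ _ Hz) as Hzs. destruct Hz as [Hz _].
  apply norm2_lt_iff in Hxz; [| exact He].
  pose proof (sqdist_triangle x z (pad (q :: s)) Hx Hz (l2_pad _)) as Htri.
  unfold sqdist at 2 in Htri. lra.
Qed.

Fixpoint shift_coef (w : nat -> R) (k i : nat) : R :=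
  match k with
  | O => 1
  | S k => w i * shift_coef w k (S i)
  end.

Lemma Biter_coef w k x i : Biter w k x i = shift_coef w k i * x (i + k)%nat.
Proof.
  revert i. induction k as [|k IH]; intros i.
  - simpl. rewrite Nat.add_0_r. ring.
  - change (w i * Biter w k x (S i) = w i * shift_coef w k (S i) * x (i + S k)%nat).
    rewrite IH. replace (i + S k)%nat with (S i + k)%nat by lia. ring.
Qed.

Section BoundedWeights.

Variable w : nat -> R.
Hypothesis w_bounds : forall j, 0 <= w j <= 2.

Lemma shift_coef_bounds k i : 0 <= shift_coef w k i <= 2 ^ k.
Proof.
  revert i. induction k as [|k IH]; intros i; simpl; [lra|].
  specialize (IH (S i)). specialize (w_bounds i). nra.
Qed.

Lemma shift_coef_le_ones A M : (forall j, (A <= j < M)%nat -> w j = 1) ->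
  forall k i, (i + k <= M)%nat -> shift_coef w k i <= 2 ^ (A - i).
Proof.
  intros Hone k. induction k as [|k IH]; intros i Hik; simpl.
  - apply pow_R1_Rle. lra.
  - specialize (IH (S i) ltac:(lia)). pose proof (shift_coef_bounds k (S i)).
    destruct (Nat.le_gt_cases A i) as [HAi | HiA].
    + rewrite Hone by lia. replace (A - S i)%nat with 0%nat in IH by lia.
      replace (A - i)%nat with 0%nat by lia. lra.
    + replace (A - i)%nat with (S (A - S i)) by lia. simpl. specialize (w_bounds i). nra.
Qed.

Lemma sq_Biter_le A n k u x0 x i :
  (forall j, (A <= j < n)%nat -> w j = 1) ->
  (forall j, (A <= j)%nat -> x0 j = 0) -> (forall j, (n <= j)%nat -> u j = 0) ->
  (A <= k < n)%nat ->
  Biter w k x i ^ 2 <=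
    2 * 4 ^ A * sub_seq u x0 (i + k)%nat ^ 2 + 2 * 4 ^ n * sub_seq x u (i + k)%nat ^ 2.
Proof.
  intros Hone Hx0 Hu Hk. rewrite Biter_coef, !pow4_sq. unfold sub_seq.
  rewrite (Hx0 (i + k)%nat), Rminus_0_r by lia.
  pose proof (shift_coef_bounds k i) as Hc.
  set (c := shift_coef w k i) in *. set (p := u (i + k)%nat). set (z := x (i + k)%nat).
  replace (c * z) with (c * p + c * (z - p)) by ring.
  assert (Hrest : (c * (z - p)) ^ 2 <= (2 ^ n) ^ 2 * (z - p) ^ 2).
  { apply sq_mul_le. pose proof (Rle_pow 2 k n ltac:(lra) ltac:(lia)). lra. }
  assert (Hcore : (c * p) ^ 2 <= (2 ^ A) ^ 2 * p ^ 2).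
  { destruct (Nat.le_gt_cases n (i + k)) as [Hbeyond | Hwithin].
    - unfold p. rewrite Hu by exact Hbeyond. simpl. lra.
    - apply sq_mul_le. pose proof (shift_coef_le_ones A n Hone k i ltac:(lia)) as Hcoef.
      pose proof (Rle_pow 2 (A - i) A ltac:(lra) ltac:(lia)). fold c in Hcoef. lra. }
  pose proof (sq_add_le (c * p) (c * (z - p))). lra.
Qed.

Lemma sqnorm_Biter_le A n k u x0 x :
  (forall j, (A <= j < n)%nat -> w j = 1) ->
  (forall j, (A <= j)%nat -> x0 j = 0) -> (forall j, (n <= j)%nat -> u j = 0) ->
  (A <= k < n)%nat -> l2 x -> l2 u -> l2 x0 ->
  sqnorm (Biter w k x) <= 2 * 4 ^ A * sqdist u x0 + 2 * 4 ^ n * sqdist x u.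
Proof.
  intros Hone Hx0 Hu Hk Hx Hul Hx0l.
  assert (Hux0 := l2_tail k _ (l2_sub _ _ Hul Hx0l)).
  assert (Hxu := l2_tail k _ (l2_sub _ _ Hx Hul)).
  apply Rle_trans with (2 * 4 ^ A * sqnorm (fun i => sub_seq u x0 (i + k)%nat)
                        + 2 * 4 ^ n * sqnorm (fun i => sub_seq x u (i + k)%nat)).
  - unfold sqnorm. rewrite <- !Series_scal_l, <- Series_plus
      by (apply (ex_series_scal_l (V := R_NormedModule)); assumption).
    apply Series_le.
    + intros i. split; [apply pow2_ge_0|]. apply (sq_Biter_le A n); assumption.
    + apply (ex_series_plus (V := R_NormedModule));
        apply (ex_series_scal_l (V := R_NormedModule)); assumption.
  - pose proof (pow_le 4 A ltac:(lra)). pose proof (pow_le 4 n ltac:(lra)).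
    apply Rplus_le_compat; apply Rmult_le_compat_l; try lra;
      apply sqnorm_tail_le, l2_sub; assumption.
Qed.

End BoundedWeights.

Definition pad_ones (a : list nat) (n : nat) : list nat := a ++ repeat 1%nat (n - length a).

Lemma length_pad_ones a n : (length a <= n)%nat -> length (pad_ones a n) = n.
Proof. intros H. unfold pad_ones. rewrite length_app, repeat_length. lia. Qed.

Lemma Forall_pad_ones a n : List.Forall (fun k => k = 1%nat \/ k = 2%nat) a ->
  List.Forall (fun k => k = 1%nat \/ k = 2%nat) (pad_ones a n).
Proof.
  intros Ha. apply Forall_app. split; [exact Ha|].
  apply Forall_forall. intros k Hk. apply repeat_spec in Hk. left. exact Hk.
Qed.

Lemma plus_ext_bounds b : List.Forall (fun k => k = 1%nat \/ k = 2%nat) b ->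
  forall j, 0 <= plus_ext b j <= 2.
Proof.
  intros Hb j. unfold plus_ext. destruct (Nat.le_gt_cases (length b) j) as [Hj | Hj].
  - rewrite nth_overflow by exact Hj. simpl. lra.
  - rewrite Forall_forall in Hb.
    destruct (Hb (nth j b 2%nat) (nth_In _ _ Hj)) as [-> | ->]; simpl; lra.
Qed.

Lemma plus_ext_pad_ones a n j : (length a <= j < n)%nat -> plus_ext (pad_ones a n) j = 1.
Proof.
  intros Hj. unfold plus_ext, pad_ones. rewrite app_nth2 by lia.
  rewrite nth_repeat_lt by lia. reflexivity.
Qed.

Lemma Q2R_pos e : (0 < e)%Q -> 0 < Q2R e.
Proof. intros He. rewrite <- RMicromega.Q2R_0. apply Qlt_Rlt, He. Qed.

Lemma is_condition_pad_ones a r d s e : is_condition a r d -> (length a <= length s)%nat ->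
  0 < Q2R e < 1 -> Q2R e < (/ 2) ^ length s -> is_condition (pad_ones a (length s)) s e.
Proof.
  intros (Ha & _) Has He Hes.
  split; [apply Forall_pad_ones, Ha|]. rewrite length_pad_ones by exact Has.
  split; [lia|]. split; [apply Rlt_Qlt; rewrite RMicromega.Q2R_0; lra|].
  split; [apply Rlt_Qlt; rewrite RMicromega.Q2R_1; lra | exact Hes].
Qed.

Lemma closure_U_cons_subset_U r d q s e x : 0 < Q2R d -> 0 < Q2R e ->
  2 * sqdist (pad (q :: s)) (pad r) + 12 * Q2R e ^ 2 < Q2R d ^ 2 / INR (S (length r)) ->
  closure_l2 (U (q :: s) e) x -> U r d x.
Proof.
  intros Hd He Hsmall Hcl. pose proof (closure_U_cons_sqdist q s e x He Hcl) as Hxs.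
  destruct Hcl as [Hx _]. apply U_of_sqdist; [exact Hd | exact Hx|].
  pose proof (sqdist_triangle x (pad (q :: s)) (pad r) Hx (l2_pad _) (l2_pad _)). lra.
Qed.

Lemma norm2_Biter_pad_ones_lt a r q s e k x :
  List.Forall (fun k => k = 1%nat \/ k = 2%nat) a -> (length r <= length a)%nat ->
  (length a <= k < length (q :: s))%nat ->
  2 * 4 ^ length a * sqdist (pad (q :: s)) (pad r) + 4 * 4 ^ length (q :: s) * Q2R e ^ 2 < 1 ->
  U (q :: s) e x -> norm2 (Biter (plus_ext (pad_ones a (length (q :: s)))) k x) < 1.
Proof.
  intros Ha Hra Hk Hsmall Hx. pose proof (U_cons_sqdist q s e x Hx) as Hxs. destruct Hx as [Hx _].
  apply norm2_lt_iff; [lra|].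
  eapply Rle_lt_trans.
  { apply (sqnorm_Biter_le _ (plus_ext_bounds _ (Forall_pad_ones _ _ Ha))
             (length a) (length (q :: s)) k (pad (q :: s)) (pad r) x).
    - apply plus_ext_pad_ones.
    - intros j Hj. apply pad_beyond. lia.
    - intros j Hj. apply pad_beyond. exact Hj.
    - exact Hk.
    - exact Hx.
    - apply l2_pad.
    - apply l2_pad. }
  pose proof (pow_lt 4 (length (q :: s)) ltac:(lra)).
  assert (4 ^ length (q :: s) * sqdist x (pad (q :: s)) < 4 ^ length (q :: s) * (2 * Q2R e ^ 2))
    by (apply Rmult_lt_compat_l; assumption).
  lra.
Qed.

Lemma cond_lt_pad_ones a r d q s e : is_condition a r d -> 0 < Q2R e ->
  2 * sqdist (pad (q :: s)) (pad r) + 12 * Q2R e ^ 2 < Q2R d ^ 2 / INR (S (length r)) ->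
  2 * 4 ^ length a * sqdist (pad (q :: s)) (pad r) + 4 * 4 ^ length (q :: s) * Q2R e ^ 2 < 1 ->
  cond_lt (pad_ones a (length (q :: s))) (q :: s) e a r d.
Proof.
  intros (Ha & Hra & Hd & _) He Hclosure Hshift. split; [|split].
  - eexists. reflexivity.
  - intros x. apply closure_U_cons_subset_U; [apply Q2R_pos, Hd | exact He | exact Hclosure].
  - intros k Hk1 Hk2 x. unfold pad_ones in Hk2. rewrite length_app, repeat_length in Hk2.
    apply (norm2_Biter_pad_ones_lt a r); [exact Ha | exact Hra | lia | exact Hshift].
Qed.

Lemma exists_pad_ball_in D c eps M : open_l2 D -> dense_l2 D -> l2 c -> 0 < eps ->
  exists s rho, (M < length s)%nat /\ sqdist (pad s) c < eps /\ 0 < rho /\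
    forall z, l2 z -> sqdist z (pad s) < rho -> D z.
Proof.
  intros HDo HDd Hc Heps.
  destruct (HDd c Hc (sqrt (eps / 4)) (sqrt_lt_R0 (eps / 4) ltac:(lra))) as (y & Hy & HDy & Hcy).
  apply norm2_lt_iff in Hcy; [|apply sqrt_lt_R0; lra]. rewrite pow2_sqrt in Hcy by lra.
  destruct (HDo y Hy HDy) as (rho & Hrho & Hball).
  pose proof (pow_lt rho 2 Hrho).
  destruct (exists_pad_close y (Rmin (eps / 4) (rho ^ 2 / 4)) M Hy) as (s & Hs & Hsy).
  { apply Rmin_glb_lt; lra. }
  apply Rmin_Rgt in Hsy as [Hsy1 Hsy2].
  exists s, (rho ^ 2 / 4). split; [exact Hs|]. split; [|split; [lra|]].
  - pose proof (sqdist_triangle (pad s) y c (l2_pad s) Hy Hc) as Htri.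
    rewrite (sqdist_sym y c) in Htri. unfold sqdist at 3 in Htri. lra.
  - intros z Hz Hzs. apply Hball; [exact Hz|]. apply norm2_lt_iff; [exact Hrho|].
    pose proof (sqdist_triangle z (pad s) y Hz (l2_pad s) Hy). unfold sqdist in *. lra.
Qed.

Theorem lemma10 (a : list nat) (r : list Q) (d : Q) (D : seqR -> Prop) (N : nat) :
  is_condition a r d -> open_l2 D -> dense_l2 D ->
  exists (b : list nat) (s : list Q) (e : Q),
    is_condition b s e /\ cond_lt b s e a r d /\
    (forall x, U s e x -> D x) /\ (N < length b)%nat.
Proof.
  intros Ha HDo HDd. pose proof Ha as (_ & _ & Hd & _). apply Q2R_pos in Hd.
  set (A := length a). set (Cr := Q2R d ^ 2 / INR (S (length r))).
  assert (HCr : 0 < Cr) by (apply Rdiv_lt_0_compat; [apply pow_lt, Hd | apply lt_0_INR; lia]).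
  assert (H4A : 0 < 4 ^ A) by (apply pow_lt; lra).
  destruct (exists_pad_ball_in D (pad r) (Rmin (Cr / 4) (/ (4 * 4 ^ A))) (N + A)
              HDo HDd (l2_pad r)) as ([|q s] & rho & Hs & Hsr & Hrho & Hball);
    [apply Rmin_glb_lt, Rinv_0_lt_compat; lra | simpl in Hs; lia |].
  apply Rmin_Rgt in Hsr as [Hsr1 Hsr2]. set (n := length (q :: s)) in *.
  assert (H4n : 0 < 4 ^ n) by (apply pow_lt; lra).
  destruct (exists_pos_Q_lt
              (Rmin (Rmin 1 ((/ 2) ^ n)) (Rmin (Cr / 24) (Rmin (rho / 2) (/ (8 * 4 ^ n))))))
    as (e & He0 & He).
  { repeat apply Rmin_glb_lt; try lra; [apply pow_lt | apply Rinv_0_lt_compat]; lra. }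
  apply Rmin_Rgt in He as [[He1 He2]%Rmin_Rgt [He3 [He4 He5]%Rmin_Rgt]%Rmin_Rgt].
  assert (Hee : Q2R e ^ 2 < Q2R e) by (simpl; nra).
  exists (pad_ones a n), (q :: s), e. split; [|split; [|split]].
  - apply (is_condition_pad_ones a r d); [exact Ha | lia | lra | exact He2].
  - apply cond_lt_pad_ones; [exact Ha | exact He0 | fold Cr; lra |].
    pose proof (mul_lt_of_lt_inv (4 ^ A) _ 4 H4A ltac:(lra) Hsr2).
    pose proof (mul_lt_of_lt_inv (4 ^ n) (Q2R e ^ 2) 8 H4n ltac:(lra) ltac:(lra)).
    fold A n. lra.
  - intros x Hx. pose proof (U_cons_sqdist q s e x Hx). destruct Hx as [Hx _].
    apply Hball; [exact Hx | lra].
  - rewrite length_pad_ones; unfold n in *; lia.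
Qed.
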